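(* Let $(\tau_i)_{i\in\mathbb{N}}$ be i.i.d. nonnegative strictly $\beta$-stable random variables, $\beta\in(0,1)$. Let $T(0)=0$, $T(n)=\tau_1+\dots+\tau_n$ and $N_t=\max\{n\ge0: T(n)\le t\}$. Then there is a constant $M$ such that for each $t\ge0$, $$E\left[\frac{N_{nt}}{n^\beta}\right]\le t^\beta M\quad\text{for all } n\ge1.$$ *)

From HB Require Import structures.
From mathcomp Require Import all_boot all_order all_algebra.
From mathcomp Require Import finmap.
From mathcomp Require Import all_classical all_reals all_analysis.
Set Implicit Arguments. Unset Strict Implicit. Unset Printing Implicit Defensive.
Import Order.TTheory GRing.Theory Num.Theory.
Local Open Scope classical_set_scope.
Local Open Scope ring_scope.

Definition partial_sum (T : Type) (R : realType) (X : nat -> T -> R)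
  (n : nat) (w : T) : R := \sum_(i < n) X i w.

Section defs.
Context (d : measure_display) (T : measurableType d) (R : realType)
  (P : probability T R).

Definition mutually_independent (X : nat -> T -> R) : Prop :=
  forall (I : {fset nat}) (B : nat -> set R),
    (forall i, i \in I -> measurable (B i)) ->
    P (\bigcap_(i in [set` I]) (X i @^-1` B i)) =
    (\prod_(i <- I) P (X i @^-1` B i))%E.

Definition identically_distributed (X : nat -> T -> R) : Prop :=
  forall i (B : set R), measurable B ->
    P (X i @^-1` B) = P (X 0%N @^-1` B).

(* strict beta-stability of the (common) law of an i.i.d. sequence:
   T(n) has the same law as n^(1/beta) X_0 for every n >= 1 *)
Definition strictly_stable (beta : R) (X : nat -> T -> R) : Prop :=
  forall n : nat, (0 < n)%N -> forall B : set R, measurable B ->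
    P (partial_sum X n @^-1` B) =
    P ((fun w => (n%:R `^ beta^-1) * X 0%N w) @^-1` B).

End defs.

(* N_t(w) = max {n >= 0 : T(n)(w) <= t}, as an extended real
   (the supremum, which is +oo if the set is unbounded) *)
Definition renewal_count (T : Type) (R : realType) (X : nat -> T -> R)
  (t : R) (w : T) : \bar R :=
  ereal_sup [set (n%:R)%:E | n in [set n : nat | partial_sum X n w <= t]].

From HB Require Import structures.
From mathcomp Require Import all_boot all_order all_algebra.
From mathcomp Require Import finmap.
From mathcomp Require Import all_classical all_reals all_analysis.
From mathcomp Require Import measurable_realfun ring lra.
Import Order.TTheory GRing.Theory Num.Theory.
Local Open Scope classical_set_scope.
Local Open Scope ring_scope.

(* Let F be the distribution function of tau_0 and c_m = m^(1/beta). By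
   stability T(m) has the law of c_m tau_0, and T(m) <= y forces tau_i <= y
   for every i < m, so independence gives F(y) <= F(c_m y)^m. Fixing x with
   F(x) < 1, the probability P(T(k) <= s) = F(s / c_k) therefore decays
   geometrically in k / (s/x)^beta. As N_s <= sum_(k >= 1) 1{T(k) <= s}
   almost surely, summing this geometric tail gives E[N_s] <= C s^beta, and
   s = n t is the claim. *)

Section geometric_bounds.
Variable R : realType.

Lemma sum_expRN_geometric_le (x : R) K : 0 < x ->
  \sum_(k < K) expR (- x) ^+ k.+1 <= x^-1.
Proof.
move=> x0; set r := expR (- x).
have r0 : 0 < r by exact: expR_gt0.
have r1x : r * (1 + x) <= 1.
  have rx : r * expR x = 1 by rewrite /r -expRD addNr expR0.
  by rewrite -[leRHS]rx ler_pM2l // expR_ge1Dx.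
set S := \sum_(k < K) r ^+ k.+1.
have sum_eq : (1 - r) * S = r * (1 - r ^+ K).
  rewrite /S; under eq_bigr do rewrite exprS.
  by rewrite -mulr_sumr mulrCA -opprB mulNr -subrX1; ring.
have S0 : 0 <= S by apply: sumr_ge0 => k _; exact/exprn_ge0/ltW.
have S_r1x : 0 <= (1 - r * (1 + x)) * S by rewrite mulr_ge0 // subr_ge0.
have rrK : 0 <= r * r ^+ K by rewrite mulr_ge0 ?exprn_ge0 // ltW.
by rewrite -(ler_pM2l x0) mulfV ?gt_eqF // -(ler_pM2l r0) mulr1; lra.
Qed.

Lemma sum_le_of_le_expn_floor (q a : R) (u : nat -> R) K :
  0 < q < 1 -> 0 < a ->
  (forall k m, m%:R <= k.+1%:R * a -> u k <= q ^+ m) ->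
  \sum_(k < K) u k <= (q * - ln q * a)^-1.
Proof.
move=> /andP[q0 q1] a0 hu; set lam := - ln q.
have lam0 : 0 < lam by rewrite oppr_gt0 ln_lt0 // q0 q1.
have qE : q = expR (- lam) by rewrite opprK lnK.
have uk k : u k <= q^-1 * expR (- (lam * a)) ^+ k.+1.
  set m := Num.truncn (k.+1%:R * a).
  have ka0 : 0 <= k.+1%:R * a by rewrite mulr_ge0 // ltW.
  have m_le : m%:R <= k.+1%:R * a by rewrite truncn_le.
  have m_gt : k.+1%:R * a < m%:R + 1 by rewrite natr1 truncnS_gt.
  apply: le_trans (hu k m m_le) _.
  rewrite qE -expRN opprK -!expRM_natl -expRD ler_expR.
  have -> : ln q = - lam by rewrite opprK.
  nra.
have sum_le :
    \sum_(k < K) u k <= q^-1 * \sum_(k < K) expR (- (lam * a)) ^+ k.+1.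
  by rewrite mulr_sumr; apply: ler_sum => k _; exact: uk.
have geo := sum_expRN_geometric_le _ K (mulr_gt0 lam0 a0).
have qV0 : 0 <= q^-1 by rewrite invr_ge0 ltW.
apply: (le_trans sum_le); apply: le_trans (ler_wpM2l qV0 geo) _.
by rewrite -invfM mulrA.
Qed.

Lemma powRV_mul_le (b u v x y : R) : 0 < b -> 0 <= u -> 0 <= v ->
  0 <= x -> 0 <= y -> u * x `^ b <= v * y `^ b ->
  u `^ b^-1 * x <= v `^ b^-1 * y.
Proof.
move=> b0 u0 v0 x0 y0 h.
have bV0 : 0 <= b^-1 by rewrite invr_ge0 ltW.
have := @ge0_ler_powR R b^-1 bV0 (u * x `^ b) (v * y `^ b).
rewrite !nnegrE !mulr_ge0 ?powR_ge0 // => /(_ isT isT h).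
by rewrite !powRM ?powR_ge0 // -!powRrM mulfV ?gt_eqF // !powRr1.
Qed.

End geometric_bounds.

Section measure_facts.
Context {d} {T : measurableType d} {R : realType}.
Implicit Types (f : T -> R) (mu : {measure set T -> \bar R}).

Lemma measurable_ler_cst f z :
  measurable_fun setT f -> measurable [set w | f w <= z].
Proof.
move=> mf; have -> : [set w | f w <= z] = f @^-1` `]-oo, z].
  by apply/seteqP; split => w /=; rewrite in_itv.
by rewrite -[_ @^-1` _]setTI; apply: mf => //; exact: measurable_itv.
Qed.

Lemma measurable_ltr_cst f z :
  measurable_fun setT f -> measurable [set w | f w < z].
Proof.
move=> mf; have -> : [set w | f w < z] = f @^-1` `]-oo, z[.
  by apply/seteqP; split => w /=; rewrite in_itv.
by rewrite -[_ @^-1` _]setTI; apply: mf => //; exact: measurable_itv.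
Qed.

Lemma measure_bigcup_eq0 mu (F : (set T)^nat) : (forall k, measurable (F k)) ->
  (forall k, mu (F k) = 0%E) -> mu (\bigcup_k F k) = 0%E.
Proof.
move=> mF F0; apply/(negligibleP mu (bigcupT_measurable _ mF)).
apply: negligible_bigcup => k; exact/(negligibleP mu (mF k))/F0.
Qed.

Lemma ge0_le_integral_nonmeasurable mu (g h : T -> \bar R) :
  (forall x, 0 <= g x)%E -> (forall x, g x <= h x)%E ->
  (\int[mu]_x g x <= \int[mu]_x h x)%E.
Proof.
move=> g0 gh; rewrite !ge0_integralTE //; last first.
  by move=> x; exact: le_trans (gh x).
apply: ereal_sup_le => _ [s sg <-]; exists s => // x.
exact: le_trans (sg x) (gh x).
Qed.

End measure_facts.

Lemma nneseries_le_of_sum_le (R : realType) (u : nat -> R) (C : R) :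
  (forall k, 0 <= u k) -> (forall K, \sum_(k < K) u k <= C) ->
  (\sum_(k <oo) (u k)%:E <= C%:E)%E.
Proof.
move=> u0 uC; apply: lime_le.
  by apply: is_cvg_nneseries => k _ _; rewrite lee_fin.
by apply: nearW => K; rewrite sumEFin lee_fin big_mkord.
Qed.

Section renewal.
Context {d} {T : measurableType d} {R : realType}.
Context {P : probability T R} {tau : nat -> T -> R}.
Hypothesis mtau : forall i, measurable_fun setT (tau i).
Hypothesis tau_ge0 : forall i, P [set w | tau i w < 0] = 0%E.

Lemma measurable_partial_sum m : measurable_fun setT (partial_sum tau m).
Proof. by apply: measurable_sum => i; exact: mtau. Qed.

Definition negative_step : set T := \bigcup_k [set w | tau k w < 0].

Lemma P_negative_step : P negative_step = 0%E.
Proof. by apply: measure_bigcup_eq0 => // k; exact: measurable_ltr_cst. Qed.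

Lemma tau_le_partial_sum w m i : ~ negative_step w -> (i < m)%N ->
  tau i w <= partial_sum tau m w.
Proof.
move=> nw im; rewrite /partial_sum (bigD1 (Ordinal im)) //= lerDl.
by apply: sumr_ge0 => j _; rewrite leNgt; apply/negP => ?; apply: nw; exists j.
Qed.

Lemma nondecreasing_partial_sum w : ~ negative_step w ->
  nondecreasing_seq (partial_sum tau ^~ w).
Proof.
move=> nw; apply/nondecreasing_seqP => n.
rewrite /partial_sum big_ord_recr /= lerDl.
by rewrite leNgt; apply/negP => ?; apply: nw; exists n.
Qed.

(* The [+oo] summands make [renewal_count_le_majorant] hold everywhere, not
   only off the null set [negative_step]; they do not change the integral. *)
Definition renewal_term (s : R) (k : nat) (w : T) : \bar R :=
  ((\1_[set w | (partial_sum tau k.+1 w <= s)%R] w)%:E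
   + +oo * (\1_[set w | (tau k w < 0)%R] w)%:E)%E.

Definition renewal_majorant (s : R) (w : T) : \bar R :=
  (\sum_(k <oo) renewal_term s k w)%E.

Lemma renewal_term_ge0 s k w : (0 <= renewal_term s k w)%E.
Proof. by rewrite adde_ge0 // ?mule_ge0 // lee_fin indicE. Qed.

Lemma renewal_count_le_majorant s w :
  (renewal_count tau s w <= renewal_majorant s w)%E.
Proof.
apply: ge_ereal_sup => _ [n /= Tn <-].
have [[k _ tauk]|nw] := pselect (negative_step w).
  have term_k : renewal_term s k w = +oo%E.
    rewrite /renewal_term [X in (+oo * X%:E)%E]indicE (mem_set tauk).
    by rewrite mule1 addey.
  suff -> : renewal_majorant s w = +oo%E by exact: leey.
  apply/eqP; rewrite eq_le leey /= /renewal_majorant.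
  apply: le_trans (nneseries_lim_ge k.+1 (fun i _ _ => renewal_term_ge0 s i w)).
  rewrite big_nat_recr //= term_k addey //.
  rewrite gt_eqF // (lt_le_trans ltNy0) // sume_ge0 // => i _.
  exact: renewal_term_ge0.
rewrite /renewal_majorant.
apply: le_trans (nneseries_lim_ge n (fun i _ _ => renewal_term_ge0 s i w)).
rewrite big_mkord.
have -> : (n%:R)%:E = \sum_(i < n) 1%E :> \bar R.
  by rewrite sumEFin sumr_const card_ord.
apply: lee_sum => i _; rewrite /renewal_term indicE mem_set.
  by rewrite leeDl ?mule_ge0 ?lee_fin ?indicE.
by apply: le_trans Tn; exact: (nondecreasing_partial_sum w nw _ _ (ltn_ord i)).
Qed.

Lemma integral_renewal_majorant s :
  (\int[P]_w renewal_majorant s w =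
   \sum_(k <oo) P [set w | (partial_sum tau k.+1 w <= s)%R])%E.
Proof.
have mA k : measurable [set w | partial_sum tau k.+1 w <= s].
  by apply: measurable_ler_cst; exact: measurable_partial_sum.
have mB k : measurable [set w | tau k w < 0] by exact: measurable_ltr_cst.
rewrite integral_nneseries //; last 2 first.
- move=> k; apply: emeasurable_funD.
    exact/measurable_EFinP/measurable_indic.
  by apply: measurable_funeM; exact/measurable_EFinP/measurable_indic.
- by move=> k w _; exact: renewal_term_ge0.
apply: eq_eseriesr => k _; rewrite ge0_integralD //; last 2 first.
- exact/measurable_EFinP/measurable_indic.
- by apply: measurable_funeM; exact/measurable_EFinP/measurable_indic.
rewrite ge0_integralZl //; last exact/measurable_EFinP/measurable_indic.
rewrite !integral_indic // !setIT.
rewrite [X in (+oo * X)%E](_ : _ = 0%E) ?mule0 ?adde0 //.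
exact: tau_ge0.
Qed.

Lemma expected_renewal_count_le s : 0 <= s ->
  (\int[P]_w renewal_count tau s w <=
   \sum_(k <oo) P [set w | (partial_sum tau k.+1 w <= s)%R])%E.
Proof.
move=> s0; rewrite -integral_renewal_majorant.
apply: ge0_le_integral_nonmeasurable.
- move=> w; apply: ereal_sup_ubound; exists 0%N => //=.
  by rewrite /partial_sum big_ord0.
- exact: renewal_count_le_majorant.
Qed.

Hypothesis tau_indep : mutually_independent P tau.
Hypothesis tau_ident : identically_distributed P tau.

Definition cdf (z : R) : R := fine (P [set w | tau 0%N w <= z]).

Lemma P_tau_le i z : P [set w | tau i w <= z] = (cdf z)%:E.
Proof.
have mz : measurable [set x : R | x <= z] by apply: measurable_ler_cst.
rewrite /cdf fineK; last by rewrite fin_num_measure //; exact: measurable_ler_cst.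
exact: tau_ident mz.
Qed.

Lemma cdf_ge0 z : 0 <= cdf z.
Proof. exact/fine_ge0/measure_ge0. Qed.

Lemma cdf_le1 z : cdf z <= 1.
Proof.
by rewrite -lee_fin -(P_tau_le 0) probability_le1 //; exact: measurable_ler_cst.
Qed.

Lemma cdf_nondecreasing : {homo cdf : x y / x <= y}.
Proof.
move=> x y xy; rewrite -lee_fin -!(P_tau_le 0); apply: le_measure.
- by rewrite inE; exact: measurable_ler_cst.
- by rewrite inE; exact: measurable_ler_cst.
- by move=> w /= /le_trans; apply.
Qed.

Lemma P_partial_sum_le m z :
  (P [set w | (partial_sum tau m w <= z)%R] <= (cdf z ^+ m)%:E)%E.
Proof.
pose I := seq_fset tt (iota 0 m).
pose all_le := \bigcap_(i in [set` I]) [set w | tau i w <= z].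
have m_all_le : measurable all_le.
  apply: fin_bigcap_measurable; first exact: finite_fset.
  by move=> i _; exact: measurable_ler_cst.
have sub : [set w | partial_sum tau m w <= z] `<=` all_le `|` negative_step.
  move=> w /= Tz; have [|nw] := pselect (negative_step w); first by right.
  left => i /=; rewrite seq_fsetE mem_iota add0n => /andP [_ im].
  by apply: le_trans Tz; exact: tau_le_partial_sum.
apply: le_trans (le_measure _ _ _ sub) _.
- by rewrite inE; apply: measurable_ler_cst; exact: measurable_partial_sum.
- rewrite inE; apply: measurableU => //.
  by apply: bigcupT_measurable => k; exact: measurable_ltr_cst.
rewrite [leLHS](_ : _ = P all_le); last first.
  apply: measureU0 m_all_le _ P_negative_step.
  by apply: bigcupT_measurable => k; exact: measurable_ltr_cst.
rewrite /all_le (tau_indep I (fun=> [set x | x <= z])); last first.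
  by move=> i _; exact: measurable_ler_cst.
under eq_bigr do rewrite P_tau_le.
rewrite prodEFin (perm_big _ (seq_fset_perm tt _)) undup_id ?iota_uniq //.
by rewrite big_const_seq count_predT size_iota iter_mulr mulr1.
Qed.

Context {beta : R}.
Hypothesis beta_gt0 : 0 < beta.
Hypothesis tau_stable : strictly_stable P beta tau.

Lemma P_partial_sum_le_scaled m y : (0 < m)%N ->
  P [set w | partial_sum tau m w <= m%:R `^ beta^-1 * y] = (cdf y)%:E.
Proof.
move=> m0; have c0 : 0 < m%:R `^ beta^-1 by apply: powR_gt0; rewrite ltr0n.
have mcy : measurable [set x : R | x <= m%:R `^ beta^-1 * y].
  exact: measurable_ler_cst.
rewrite -(P_tau_le 0); have -> := tau_stable _ m0 _ mcy.
by congr (P _); apply/seteqP; split => w /=; rewrite ler_pM2l.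
Qed.

Lemma cdf_le_expn m y x : (0 < m)%N -> m%:R `^ beta^-1 * y <= x ->
  cdf y <= cdf x ^+ m.
Proof.
move=> m0 yx; rewrite -lee_fin -(P_partial_sum_le_scaled m y m0).
apply: le_trans (P_partial_sum_le _ _) _.
rewrite lee_fin lerXn2r ?nnegrE ?cdf_ge0 //.
exact: cdf_nondecreasing.
Qed.

Hypothesis tau0_neq0 : (0 < P [set w | tau 0%N w != 0%R])%E.

Lemma exists_cdf_lt1 : exists2 x, 0 < x & cdf x < 1.
Proof.
pose G j := ~` [set w | tau 0%N w <= j.+1%:R^-1].
have mG j : measurable (G j) by apply/measurableC/measurable_ler_cst.
have [j PGj] : exists j, (0 < P (G j))%E.
  apply: contrapT => /forallNP G0.
  have {}G0 j : P (G j) = 0%E.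
    by apply/eqP; rewrite eq_le measure_ge0 andbT leNgt; apply/negP; exact: G0.
  have neg_or_G : [set w | tau 0%N w != 0%R] `<=`
                   [set w | tau 0%N w < 0] `|` \bigcup_j G j.
    move=> w /= tw; have [|tw_ge0] := ltP (tau 0%N w) 0; first by left.
    have tw_gt0 : 0 < tau 0%N w by rewrite lt_neqAle eq_sym tw.
    right; exists (Num.truncn (tau 0%N w)^-1) => //; rewrite /G /=.
    apply/negP; rewrite -ltNge.
    by rewrite invf_plt ?posrE ?ltr0n // truncnS_gt.
  have mneg : measurable [set w | tau 0%N w < 0] by exact: measurable_ltr_cst.
  have mU : measurable (\bigcup_j G j) by exact: bigcupT_measurable.
  suff : (P [set w | tau 0%N w != 0%R] <= 0)%E by rewrite leNgt tau0_neq0.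
  apply: (@le_trans _ _ (P ([set w | tau 0%N w < 0] `|` \bigcup_j G j))).
    apply: le_measure neg_or_G; rewrite inE; last exact: measurableU.
    have -> : [set w | tau 0%N w != 0%R] = tau 0%N @^-1` (~` [set 0]).
      by apply/seteqP; split => w /= /eqP.
    rewrite -[_ @^-1` _]setTI; apply: mtau => //.
    by apply: measurableC; exact: measurable_set1.
  rewrite (measureU0 mneg mU (measure_bigcup_eq0 P G mG G0)).
  by rewrite -[leRHS](tau_ge0 0%N).
exists j.+1%:R^-1; first by rewrite invr_gt0 ltr0n.
move: PGj; rewrite probability_setC; last exact: measurable_ler_cst.
by rewrite P_tau_le -EFinB lte_fin subr_gt0.
Qed.

Lemma cdf0 : cdf 0 = 0.
Proof.
have [x x_gt0 cdfx_lt1] := exists_cdf_lt1.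
have cdf0_lt1 : cdf 0 < 1.
  by apply: le_lt_trans cdfx_lt1; exact/cdf_nondecreasing/ltW.
have cdf0_le_sq : cdf 0 <= cdf 0 ^+ 2 by apply: cdf_le_expn; rewrite ?mulr0.
by have := cdf_ge0 0; nra.
Qed.

Lemma cdf_div_le_expn x s k m : 0 < x -> 0 < s ->
  m%:R <= k.+1%:R * (x `^ beta / s `^ beta) ->
  cdf (s / k.+1%:R `^ beta^-1) <= cdf x ^+ m.
Proof.
case: m => [|m] x_gt0 s_gt0 m_le; first by rewrite expr0 cdf_le1.
have c_gt0 : 0 < k.+1%:R `^ beta^-1 by apply: powR_gt0; rewrite ltr0n.
have hm : m.+1%:R * s `^ beta <= k.+1%:R * x `^ beta.
  by move: m_le; rewrite mulrA ler_pdivlMr // powR_gt0.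
have hc : m.+1%:R `^ beta^-1 * s <= k.+1%:R `^ beta^-1 * x.
  by apply: powRV_mul_le; rewrite // ltW.
apply: cdf_le_expn => //.
by rewrite mulrA ler_pdivrMr // [x * _]mulrC.
Qed.

Lemma expected_renewal_count_le_powR :
  exists C, forall s, 0 <= s ->
    (\int[P]_w renewal_count tau s w <= (C * s `^ beta)%:E)%E.
Proof.
have [x x_gt0 cdfx_lt1] := exists_cdf_lt1.
have cdfx_ge0 := cdf_ge0 x.
pose q := (1 + cdf x) / 2.
have q01 : 0 < q < 1 by apply/andP; split; rewrite /q; lra.
have cdfx_le_q : cdf x <= q by rewrite /q; lra.
exists (q * - ln q * x `^ beta)^-1 => s s_ge0.
apply: le_trans (expected_renewal_count_le s s_ge0) _.
move: s_ge0; rewrite le_eqVlt => /predU1P [<-|s_gt0].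
  rewrite powR0 ?gt_eqF // mulr0 eseries0 // => k _ _.
  by rewrite -(mulr0 (k.+1%:R `^ beta^-1)) P_partial_sum_le_scaled // cdf0.
pose u k := cdf (s / k.+1%:R `^ beta^-1).
have P_step k : P [set w | (partial_sum tau k.+1 w <= s)%R] = (u k)%:E.
  have c_gt0 : 0 < k.+1%:R `^ beta^-1 by apply: powR_gt0; rewrite ltr0n.
  by rewrite -(P_partial_sum_le_scaled k.+1) // mulrC divfK // gt_eqF.
rewrite (eq_eseriesr (fun k _ => P_step k)).
apply: nneseries_le_of_sum_le => [k|K]; first exact: cdf_ge0.
rewrite [leRHS](_ : _ = (q * - ln q * (x `^ beta / s `^ beta))^-1); last first.
  by rewrite mulrA [RHS]invf_div mulrC.
apply: sum_le_of_le_expn_floor => //; first by rewrite divr_gt0 ?powR_gt0.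
move=> k m m_le; apply: (@le_trans _ _ (cdf x ^+ m)).
  exact: cdf_div_le_expn.
by rewrite lerXn2r ?nnegrE ?(le_trans cdfx_ge0).
Qed.

End renewal.

Theorem lemma3p4 (d : measure_display) (T : measurableType d) (R : realType)
  (P : probability T R) (tau : nat -> T -> R) (beta : R) :
  0 < beta < 1 ->
  (forall i, measurable_fun setT (tau i)) ->
  mutually_independent P tau ->
  identically_distributed P tau ->
  (forall i, P [set w | tau i w < 0] = 0%E) ->
  (0 < P [set w | tau 0%N w != 0%R])%E ->
  strictly_stable P beta tau ->
  exists M : R, forall t : R, 0 <= t -> forall n : nat, (1 <= n)%N ->
    ((n%:R `^ beta)^-1%:E * \int[P]_w renewal_count tau (n%:R * t) w
      <= (t `^ beta * M)%:E)%E.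
Proof.
(* The bound holds for every beta > 0. *)
move=> /andP[beta_gt0 _] mtau tau_indep tau_ident tau_ge0 tau0_neq0 tau_stable.
have [C hC] := expected_renewal_count_le_powR mtau tau_ge0 tau_indep tau_ident
  beta_gt0 tau_stable tau0_neq0.
exists C => t t_ge0 n n_ge1.
have n_gt0 : 0 < n%:R :> R by rewrite ltr0n.
have nb_gt0 : 0 < n%:R `^ beta by exact: powR_gt0.
apply: le_trans (lee_wpmul2l _ (hC _ (mulr_ge0 (ltW n_gt0) t_ge0))) _.
  by rewrite lee_fin invr_ge0 ltW.
by rewrite -EFinM lee_fin powRM ?(ltW n_gt0) // mulrCA mulKf ?gt_eqF // mulrC.
Qed.
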